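(* Let $(R(m,d))_{m,d\in\mathbb{N}}$ be a family of graphs as described in the context. Let $d\in\mathbb{N}$ and $\varepsilon>0$. Then for all sufficiently large $m$ and every $\alpha\in[0,1]$, every subgraph $G$ of $R(m,d)$ with at least $(\alpha+2\varepsilon)\cdot e(R(m,d))$ edges satisfies \[ \frac{1}{d}\sum_{\ell=1}^d \frac{e_\ell(G)}{2^{d-1}m^2}\ge\alpha+\varepsilon. \]
   Context: For distinct $x,y\in\{0,1\}^d$, $\delta(x,y)=\min\{i: x_i\ne y_i\}$. For $x\in\{0,1\}^d$ the block $B_x$ is $\{x\}\times[m]$. An edge of a graph on $\{0,1\}^d\times[m]$ joining $B_x$ to $B_y$ with $\delta(x,y)=\ell$ is a level-$\ell$ edge; $e_\ell(G)$ is the number of level-$\ell$ edges of $G$. The family $R(m,d)$ (a graph on $\{0,1\}^d\times[m]$) satisfies: for every $d\in\mathbb{N}$ and $\varepsilon>0$, for all sufficiently large $m$, (i) for every $\ell\in[d]$, $e_\ell(R(m,d))=(1\pm\varepsilon)2^{d-1}m^2$ and $e(R(m,d))=(1\pm\varepsilon)d2^{d-1}m^2$; (ii) for all distinct $x,y$ and $P\subseteq B_x$, $Q\subseteq B_y$ with $|P|,|Q|\ge m^{2/3}$, the number of edges between $P$ and $Q$ is at most $(1+\varepsilon)2^{-d+\delta(x,y)}|P||Q|$. Here $a=(1\pm\varepsilon)b$ means $(1-\varepsilon)b\le a\le(1+\varepsilon)b$. *)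

From HB Require Import structures.
From mathcomp Require Import all_boot all_order all_algebra.
From mathcomp Require Import reals exp.
Set Implicit Arguments. Unset Strict Implicit. Unset Printing Implicit Defensive.
Import Order.TTheory GRing.Theory Num.Theory.
Local Open Scope ring_scope.

Definition cube (d : nat) := {ffun 'I_d -> bool}.
Definition vtx (d m : nat) := (cube d * 'I_m)%type.

(* a (simple) graph on vertex type V is given by its edge set; every edge is a
   2-element set of vertices *)
Definition simple_graph (V : finType) (E : {set {set V}}) : bool :=
  [forall e in E, #|e| == 2]%N.

(* delta(x,y) = min{ i : x_i <> y_i }, with coordinates numbered 1..d *)
Definition delta (d : nat) (x y : cube d) : nat :=
  (find (fun i : 'I_d => x i != y i) (enum 'I_d)).+1.

Definition block (d m : nat) (x : cube d) : {set vtx d m} :=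
  [set v | v.1 == x].

Definition is_level (d m : nat) (l : nat) (e : {set vtx d m}) : bool :=
  [exists u, exists v, [&& e == [set u; v], u.1 != v.1 & delta u.1 v.1 == l]].

Definition nedges (V : finType) (E : {set {set V}}) : nat := #|E|.

Definition e_level (d m l : nat) (E : {set {set vtx d m}}) : nat :=
  #|[set e in E | is_level l e]|.

Definition e_between (V : finType) (E : {set {set V}}) (P Q : {set V}) : nat :=
  #|[set e in E | [exists u in P, exists v in Q, e == [set u; v]]]|.

Definition approx (R : realFieldType) (eps a b : R) : Prop :=
  (1 - eps) * b <= a /\ a <= (1 + eps) * b.

Definition random_like_family (R : realType)
    (Rg : forall m d : nat, {set {set vtx d m}}) : Prop :=
  (forall m d, simple_graph (Rg m d)) /\
  forall (d : nat) (eps : R), 0 < eps ->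
  exists M : nat, forall m : nat, (M <= m)%N ->
    ((forall l : nat, (1 <= l <= d)%N ->
        approx eps (e_level l (Rg m d))%:R (2 ^+ d.-1 * (m%:R) ^+ 2)) /\
     approx eps (nedges (Rg m d))%:R (d%:R * 2 ^+ d.-1 * (m%:R) ^+ 2)) /\
    (forall (x y : cube d) (P Q : {set vtx d m}),
        x != y -> P \subset block m x -> Q \subset block m y ->
        powR (m%:R : R) (2 / 3) <= #|P|%:R ->
        powR (m%:R : R) (2 / 3) <= #|Q|%:R ->
        (e_between (Rg m d) P Q)%:R
          <= (1 + eps) * (2 ^+ delta x y / 2 ^+ d) * #|P|%:R * #|Q|%:R).

From HB Require Import structures.
From mathcomp Require Import all_boot all_order all_algebra.
From mathcomp Require Import reals exp.
From mathcomp Require Import lra.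
Set Implicit Arguments. Unset Strict Implicit. Unset Printing Implicit Defensive.
Import Order.TTheory GRing.Theory Num.Theory.
Local Open Scope ring_scope.

(* An edge has at most one level, so deleting the [e(R) - e(G)] edges of [R]
   missing from [G] lowers the sum of the level counts by at most that much.
   Property (i) with precision [dl <= eps/2] makes every level count of [R] at
   least [(1 - dl) 2^(d-1) m^2] and [e(R)] at most [(1 + dl) d 2^(d-1) m^2], so
   the average normalised level count of [G] is at least
   [alpha + 2 eps - 2 dl >= alpha + eps]. *)

Lemma deltaC d (x y : cube d) : delta x y = delta y x.
Proof. by rewrite /delta; congr _.+1; apply: eq_find => i; rewrite eq_sym. Qed.

Lemma is_levelE d m l0 l (e : {set vtx d m}) :
  is_level l0 e -> is_level l e = (l == l0).
Proof.
case/existsP=> u /existsP [v /and3P [/eqP -> uv /eqP <-]].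
apply/idP/eqP => [|->]; last first.
  by apply/existsP; exists u; apply/existsP; exists v; rewrite eqxx uv eqxx.
case/existsP=> u' /existsP [v' /and3P [/eqP E + /eqP <-]].
have : v' \in [set u; v] by rewrite E set22.
have : u' \in [set u; v] by rewrite E set21.
rewrite !inE => /orP [] /eqP -> /orP [] /eqP ->; rewrite ?eqxx // => _.
exact: deltaC.
Qed.

Lemma count_is_level_le1 d m (e : {set vtx d m}) (s : seq nat) :
  uniq s -> (count (fun l => is_level l e) s <= 1)%N.
Proof.
move=> us.
have [/hasP [l0 _ lev0] | /hasPn no_level] := boolP (has (fun l => is_level l e) s).
  by rewrite (eq_count (fun l => is_levelE l lev0)) count_uniq_mem ?leq_b1.
by rewrite (eq_in_count (a2 := pred0)) ?count_pred0 // => l /no_level /negbTE.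
Qed.

Lemma e_level_sum d m l (X : {set {set vtx d m}}) :
  e_level l X = (\sum_(e in X) is_level l e)%N.
Proof.
rewrite /e_level -sum1dep_card big_mkcondr /=.
by apply: eq_bigr => e _; case: is_level.
Qed.

Lemma sum_e_level_le_card d m (X : {set {set vtx d m}}) :
  (\sum_(1 <= l < d.+1) e_level l X <= #|X|)%N.
Proof.
under eq_bigr => l _ do rewrite e_level_sum.
rewrite exchange_big /= -sum1_card; apply: leq_sum => e _.
apply: leq_trans (count_is_level_le1 e (iota_uniq 1 d)).
rewrite -sum1_count (big_mkcond (fun l => is_level l e)) /index_iota subn1 /=.
by apply: eq_leq; apply: eq_bigr => l _; case: is_level.
Qed.

Lemma e_level_setID d m l (G B : {set {set vtx d m}}) :
  G \subset B -> e_level l B = (e_level l G + e_level l (B :\: G))%N.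
Proof. by move=> sGB; rewrite !e_level_sum (big_setID G) (setIidPr sGB). Qed.

Lemma sum_e_level_subset d m (G B : {set {set vtx d m}}) : G \subset B ->
  (\sum_(1 <= l < d.+1) e_level l B
     <= \sum_(1 <= l < d.+1) e_level l G + (#|B| - #|G|))%N.
Proof.
move=> sGB; under eq_bigr => l _ do rewrite (e_level_setID l sGB).
rewrite big_split /= leq_add2l.
by have := sum_e_level_le_card (B :\: G); rewrite cardsD (setIidPr sGB).
Qed.

Lemma level_density_bound (R : realFieldType) (T N nG SR SG alpha eps dl : R) :
  0 < T -> 0 <= alpha -> 0 <= dl < 1 -> 2 * dl <= eps ->
  (1 - dl) * T <= SR -> SR <= N -> N <= (1 + dl) * T ->
  nG <= N -> (alpha + 2 * eps) * N <= nG -> SR <= SG + (N - nG) ->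
  (alpha + eps) * T <= SG.
Proof.
move=> T_gt0 alpha_ge0 /andP [dl_ge0 dl_lt1] dl_eps hSR hSRN hN hnG hG hSG.
have N_gt0 : 0 < N by apply: lt_le_trans hSRN; apply: lt_le_trans hSR; nra.
have dense_le1 : alpha + 2 * eps <= 1.
  by rewrite -(ler_pM2r N_gt0) mul1r (le_trans hG).
have : (1 - alpha - 2 * eps) * N <= (1 - alpha - 2 * eps) * ((1 + dl) * T).
  by apply: ler_wpM2l => //; lra.
nra.
Qed.

Theorem proposition2p5 (R : realType)
    (Rg : forall m d : nat, {set {set vtx d m}}) :
  random_like_family R Rg ->
  forall (d : nat) (eps : R), (0 < d)%N -> 0 < eps ->
  exists M : nat, forall m : nat, (M <= m)%N ->
  forall alpha : R, 0 <= alpha <= 1 ->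
  forall G : {set {set vtx d m}}, G \subset Rg m d ->
    (alpha + 2 * eps) * (nedges (Rg m d))%:R <= (nedges G)%:R ->
    alpha + eps <=
      d%:R^-1 * \sum_(1 <= l < d.+1)
                  (e_level l G)%:R / (2 ^+ d.-1 * (m%:R) ^+ 2).
Proof.
move=> [_ family] d eps d_gt0 eps_gt0.
pose dl := eps / (2 + eps).
have eps2_gt0 : 0 < 2 + eps by lra.
have dl_gt0 : 0 < dl by rewrite divr_gt0.
have dl_lt1 : dl < 1 by rewrite ltr_pdivrMr // mul1r; lra.
have dl_eps : 2 * dl <= eps by rewrite mulrA ler_pdivrMr //; nra.
have [M bounds] := family d dl dl_gt0.
exists (maxn M 1) => m; rewrite geq_max => /andP [leMm m_gt0].
move=> alpha /andP [alpha_ge0 _] G sGR hG.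
have [[levels [_ total]] _] := bounds m leMm.
set c : R := 2 ^+ d.-1 * m%:R ^+ 2.
have dc_gt0 : 0 < d%:R * c by rewrite !mulr_gt0 ?exprn_gt0 ?ltr0n.
rewrite -mulr_suml mulrCA -invfM ler_pdivlMr //.
apply: (level_density_bound (dl := dl) (N := (nedges (Rg m d))%:R)
  (nG := (nedges G)%:R) (SR := \sum_(1 <= l < d.+1) (e_level l (Rg m d))%:R)) => //.
- by rewrite ltW.
- have -> : (1 - dl) * (d%:R * c) = \sum_(1 <= l < d.+1) ((1 - dl) * c).
    by rewrite sumr_const_nat subn1 mulrCA mulr_natl.
  by apply: ler_sum_nat => l /levels [].
- by rewrite -natr_sum ler_nat sum_e_level_le_card.
- by rewrite /c [d%:R * _]mulrA.
- by rewrite ler_nat subset_leq_card.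
- rewrite -!natr_sum -natrB ?subset_leq_card // -natrD ler_nat.
  exact: sum_e_level_subset.
Qed.
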